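(* Let $c_m$ be an arbitrary finite sequence of complex numbers, and suppose $r|b^{\infty}$, meaning all the prime factors dividing $r$ also divide $b$. Then \begin{equation*} \sum_{x \bmod b} \Big| \sum_{m \geq 1} c_m S(rx, m ;br) \Big|^2 = b r^2 \sum_{\substack{y \bmod b \\ (y,b)=1}} \Big| \sum_{m \equiv 0 \bmod r} c_{m} e\Big(\frac{y m/r}{b}\Big) \Big|^2, \end{equation*} where $S(a,b;c)$ denotes the classical Kloosterman sum and $e(x)=e^{2\pi i x}$. *)

From mathcomp Require Import all_boot all_order all_algebra.
From mathcomp Require Import complex.
From mathcomp Require Import reals trigo.
Set Implicit Arguments. Unset Strict Implicit. Unset Printing Implicit Defensive.
Import Order.TTheory GRing.Theory Num.Theory.
Local Open Scope ring_scope.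

Definition e_ (R : realType) (t : R) : R[i] :=
  Complex (cos (2 * pi * t)) (sin (2 * pi * t)).

(* Classical Kloosterman sum
   S(a, b; c) = sum_{u mod c, (u,c)=1} e((a u + b ubar)/c),
   where ubar is the inverse of u mod c (the inner sum ranges over the
   unique residue v mod c with u v = 1 mod c). *)
Definition kloosterman (R : realType) (a b : int) (c : nat) : R[i] :=
  \sum_(u < c | coprime u c)
    \sum_(v < c | ((u * v) %% c == 1 %% c)%N)
      e_ ((a * (u : nat)%:Z + b * (v : nat)%:Z)%:~R / c%:R).

From mathcomp Require Import all_boot all_order all_algebra.
From mathcomp Require Import complex.
From mathcomp Require Import reals trigo.
From mathcomp Require Import ring lra.
Import Order.TTheory GRing.Theory Num.Theory.

(* Write S(rx, m; br) = sum_{v mod br, (v,br)=1} e(x vbar / b) e(m v / br)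
   with vbar the inverse of v mod br.  Expanding the square and summing over
   x mod b, orthogonality of additive characters mod b keeps only the pairs
   (v, v') with vbar = vbar' mod b, i.e. v = v' mod b, so the left side is
   b times the sum over y mod b of |T(y)|^2, where T(y) = residue_sum y
   collects the v = y mod b.  Since r | b^oo, (v, br) = 1 iff (y, b) = 1; writing v = y + b t
   with t mod r, the sum over t is again a character sum, now mod r, which
   keeps only the m divisible by r and contributes the factor r. *)

Definition invmod (n v : nat) : nat := ((egcdn v n).1 %% n)%N.

Lemma invmod_lt n v : (0 < n)%N -> (invmod n v < n)%N.
Proof. by move=> n_gt0; rewrite ltn_pmod. Qed.

Lemma mulnVmod n v : (0 < n)%N -> coprime v n -> (v * invmod n v = 1 %[mod n])%N.
Proof.
move=> n_gt0; have [->|v_gt0] := posnP v => cop.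
  by move: cop; rewrite /coprime gcd0n => /eqP ->; rewrite !modn1.
rewrite /invmod; case: egcdnP => // km kn hk _ /=.
by rewrite modnMmr mulnC hk (eqP cop) modnMDl.
Qed.

Lemma modn_inv_uniq d u u' v :
  (u * v = 1 %[mod d])%N -> (u' * v = 1 %[mod d])%N -> (u = u' %[mod d])%N.
Proof.
move=> h h'.
rewrite -[u]muln1 -modnMmr -h' modnMmr mulnCA -modnMmr mulnC -modnMml h.
by rewrite modn_mod modnMml mul1n.
Qed.

Lemma coprime_modn_inv n u v :
  (u * v = 1 %[mod n])%N -> coprime u n && coprime v n.
Proof.
by move=> h; rewrite -coprimeMl /coprime -gcdn_modl h gcdn_modl gcd1n.
Qed.

Lemma eqn_mod_inv d u v u' v' :
  (u * v = 1 %[mod d])%N -> (u' * v' = 1 %[mod d])%N ->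
  (u == u' %[mod d])%N = (v == v' %[mod d])%N.
Proof.
have inv_eq a x a' x' : (a * x = 1 %[mod d])%N -> (a' * x' = 1 %[mod d])%N ->
    (a = a' %[mod d])%N -> (x = x' %[mod d])%N.
  move=> h h' e; apply: (@modn_inv_uniq d x x' a); first by rewrite mulnC.
  by rewrite mulnC -modnMml e modnMml.
move=> h h'; apply/eqP/eqP; first exact: inv_eq.
by apply: inv_eq; rewrite mulnC.
Qed.

Lemma coprime_mul_supp b r v : (0 < r)%N ->
  (forall p, prime p -> (p %| r)%N -> (p %| b)%N) ->
  coprime v (b * r) = coprime (v %% b) b.
Proof.
move=> r_gt0 supp; rewrite coprime_modl coprimeMr.
case cvb: (coprime v b) => //=; apply/negPn/negP => ncvr.
have g_gt1 : (1 < gcdn v r)%N by rewrite ltn_neqAle eq_sym ncvr gcdn_gt0 r_gt0 orbT.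
set p := pdiv (gcdn v r).
have p_pr : prime p := pdiv_prime g_gt1.
have [pv pr] : (p %| v)%N /\ (p %| r)%N.
  by split; apply: dvdn_trans (pdiv_dvd _) _; rewrite ?dvdn_gcdl ?dvdn_gcdr.
have : (p %| gcdn v b)%N by rewrite dvdn_gcd pv supp.
by rewrite (eqP cvb) dvdn1 => /eqP p1; move: (prime_gt1 p_pr); rewrite p1.
Qed.

Local Open Scope ring_scope.
Local Open Scope complex_scope.

Lemma sum_residue_class (V : nmodType) b r y (f : nat -> V) : (y < b)%N ->
  \sum_(v < b * r | (v %% b == y)%N) f v = \sum_(t < r) f (y + b * t)%N.
Proof.
move=> yb; elim: r => [|r IH]; first by rewrite muln0 !big_ord0.
rewrite big_ord_recr /= -IH -!(big_mkord (fun v => (v %% b == y)%N)).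
rewrite [LHS](big_cat_nat (n := (b * r)%N)) ?leq_mul2l ?leqnSn ?orbT //=.
congr (_ + _); rewrite mulnS addnC -{1}[(b * r)%N]add0n big_addn addKn.
rewrite big_mkord (big_pred1 (Ordinal yb)) /=; first by rewrite addnC.
by move=> i /=; rewrite addnC mulnC modnMDl modn_small.
Qed.

Section AdditiveCharacter.
Variable R : realType.
Implicit Types s t : R.

Lemma eD s t : e_ (s + t) = e_ s * e_ t.
Proof. by rewrite /e_ mulrDr cosD sinD /=; congr Complex; ring. Qed.

Lemma e0 : e_ (0 : R) = 1.
Proof. by rewrite /e_ mulr0 cos0 sin0. Qed.

Lemma conjc_e t : conjc (e_ t) = e_ (- t).
Proof. by rewrite /e_ mulrN cosN sinN. Qed.

Lemma e_natr (k : nat) : e_ (k%:R : R) = 1.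
Proof.
elim: k => [|k IH]; first exact: e0.
rewrite -addn1 natrD eD IH mul1r /e_ mulr1.
by rewrite (_ : 2 * pi = pi *+ 2) ?mulr_natl // cos2pi sin2pi.
Qed.

Lemma e_intr (z : int) : e_ (z%:~R : R) = 1.
Proof.
case: z => k; first by rewrite -pmulrn e_natr.
by rewrite NegzE mulrNz -conjc_e e_natr conjc1.
Qed.

Lemma e_natrM (x : nat) t : e_ (x%:R * t) = e_ t ^+ x.
Proof.
elim: x => [|x IH]; first by rewrite mul0r e0.
by rewrite -addn1 natrD mulrDl mul1r eD IH exprD expr1.
Qed.

Lemma e_neq1 t : 0 < t < 1 -> e_ t != 1.
Proof.
move=> /andP[t_gt0 t_lt1]; apply/eqP; rewrite /e_ => -[hc _].
have sin_gt0 : 0 < sin (pi * t).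
  apply: sin_gt0_pi; rewrite mulr_gt0 ?pi_gt0 //=.
  by rewrite -ltr_pdivlMl ?pi_gt0 // mulVf ?gt_eqF ?pi_gt0.
move: hc; rewrite (_ : 2 * pi * t = (pi * t) *+ 2); last by rewrite -mulr_natl; ring.
rewrite cos_mulr2n => hc; have := cos2Dsin2 (pi * t).
by move: hc sin_gt0; set C := cos _; set S := sin _; nra.
Qed.

Lemma sum_e_ord (b : nat) (k : int) : (0 < b)%N ->
  \sum_(x < b) e_ (x%:R * (k%:~R / b%:R) : R) =
  if (b%:Z %| k)%Z then b%:R else 0.
Proof.
move=> b_gt0; have b_neq0 : (b%:R : R) != 0 by rewrite pnatr_eq0 -lt0n.
under eq_bigr do rewrite e_natrM.
set z := e_ _; case: ifP => bk.
  have -> : z = 1.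
    case/dvdzP: bk => q kq; rewrite /z kq rmorphM /= mulrK ?e_intr //.
    by rewrite unitfE intr_eq0 eqz_nat -lt0n.
  by under eq_bigr do rewrite expr1n; rewrite sumr_const card_ord.
have zb : z ^+ b = 1 by rewrite /z -e_natrM mulrC divfK // e_intr.
have z_neq1 : z != 1.
  rewrite /z {1}(divz_eq k b%:Z) rmorphD rmorphM /= mulrDl -pmulrn.
  rewrite mulrK ?unitfE // eD e_intr mul1r.
  have km_ge0 : (0 <= (k %% b%:Z)%Z) by rewrite modz_ge0 // eqz_nat -lt0n.
  have km_lt : ((k %% b%:Z)%Z < b%:Z) by rewrite ltz_pmod // ltz_nat.
  have km_neq0 : (k %% b%:Z)%Z != 0 by apply/eqP => /dvdz_mod0P; rewrite bk.
  apply: e_neq1; apply/andP; split.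
    by rewrite divr_gt0 ?ltr0n // ltr0z lt_neqAle eq_sym km_neq0.
  by rewrite ltr_pdivrMr ?ltr0n // mul1r pmulrn ltr_int.
have := subrX1 z b; rewrite zb subrr => /esym/eqP.
by rewrite mulf_eq0 subr_eq0 (negbTE z_neq1) => /eqP.
Qed.

Lemma sum_e_mulVconj (b u u' : nat) : (0 < b)%N ->
  \sum_(x < b) e_ ((x * u)%N%:R / b%:R : R) * conjc (e_ ((x * u')%N%:R / b%:R)) =
  if (u == u' %[mod b])%N then b%:R else 0.
Proof.
move=> b_gt0; have b_neq0 : (b%:R : R) != 0 by rewrite pnatr_eq0 -lt0n.
under eq_bigr => x _.
  rewrite conjc_e -eD (_ : _ - _ = x%:R * ((u%:Z - u'%:Z)%:~R / b%:R)).
    over.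
  by rewrite rmorphB /= -!pmulrn !natrM; field.
by rewrite sum_e_ord // -eqz_mod_dvd !modz_nat eqz_nat.
Qed.

End AdditiveCharacter.

Section KloostermanIdentity.
Variables (R : realType) (N : nat) (c : nat -> R[i]) (b r : nat).
Hypotheses (b_gt0 : (0 < b)%N) (r_gt0 : (0 < r)%N)
  (supp_rb : forall p : nat, prime p -> (p %| r)%N -> (p %| b)%N).

Let br_gt0 : (0 < b * r)%N. Proof. by rewrite muln_gt0 b_gt0 r_gt0. Qed.
Let b_neq0 : (b%:R : R) != 0. Proof. by rewrite pnatr_eq0 -lt0n. Qed.
Let r_neq0 : (r%:R : R) != 0. Proof. by rewrite pnatr_eq0 -lt0n. Qed.

Definition phase_sum (v : nat) : R[i] :=
  \sum_(1 <= m < N.+1) c m * e_ ((m * v)%N%:R / (b * r)%N%:R).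

Definition residue_sum (y : nat) : R[i] :=
  \sum_(v < b * r | coprime v (b * r) && (v %% b == y)%N) phase_sum v.

Definition reduced_sum (y : nat) : R[i] :=
  \sum_(1 <= m < N.+1 | (r %| m)%N) c m * e_ ((y * (m %/ r))%N%:R / b%:R).

Lemma sum_kloosterman_phase (x : nat) :
  \sum_(1 <= m < N.+1) c m * kloosterman R (r * x)%N%:Z m%:Z (b * r) =
  \sum_(v < b * r | coprime v (b * r))
     e_ ((x * invmod (b * r) v)%N%:R / b%:R) * phase_sum v.
Proof.
have split_phase (u m v : nat) :
    ((((r * x)%N%:Z * u%:Z + m%:Z * v%:Z)%:~R / (b * r)%N%:R) : R) =
    (x * u)%N%:R / b%:R + (m * v)%N%:R / (b * r)%N%:R.
  rewrite -!PoszM -PoszD -pmulrn !natrM natrD !natrM.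
  by field; rewrite b_neq0 r_neq0.
rewrite /kloosterman; under eq_bigr do rewrite mulr_sumr.
rewrite exchange_big /=; under eq_bigr => u _.
  under eq_bigr do rewrite mulr_sumr.
  rewrite exchange_big /=; under eq_bigr => v _.
    under eq_bigr do rewrite split_phase eD mulrCA.
    rewrite -mulr_sumr; over.
  over.
rewrite /= (exchange_big_dep (fun v : 'I_(b * r) => coprime v (b * r))) /=; last first.
  by move=> u v _ /eqP/coprime_modn_inv/andP[].
apply: eq_bigr => v cv; have vV := mulnVmod _ _ br_gt0 cv.
rewrite (big_pred1 (Ordinal (invmod_lt _ v br_gt0))) /phase_sum // => u /=.
apply/idP/eqP => [/andP[_ uv]|->] /=.
  apply: val_inj; rewrite /= -(modn_small (ltn_ord u)) -(modn_small (invmod_lt _ v br_gt0)).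
  by apply: (@modn_inv_uniq _ _ _ v); rewrite ?(eqP uv) // mulnC.
have Vv : (invmod (b * r) v * v = 1 %[mod b * r])%N by rewrite mulnC.
by rewrite (andP (coprime_modn_inv _ _ _ Vv)).1 Vv eqxx.
Qed.

Lemma invmod_modb (v : nat) : coprime v (b * r) ->
  (invmod (b * r) v * v = 1 %[mod b])%N.
Proof.
move=> cv; have bbr : (b %| b * r)%N by rewrite dvdn_mulr.
by rewrite -(modn_dvdm _ bbr) mulnC (mulnVmod _ _ br_gt0 cv) modn_dvdm.
Qed.

Lemma sum_sqr_norm_kloosterman_phase :
  \sum_(x < b) `| \sum_(v < b * r | coprime v (b * r))
     e_ ((x * invmod (b * r) v)%N%:R / b%:R) * phase_sum v | ^+ 2 =
  \sum_(v < b * r | coprime v (b * r)) \sum_(v' < b * r | coprime v' (b * r))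
     phase_sum v * conjc (phase_sum v') * (if (v == v' %[mod b])%N then b%:R else 0).
Proof.
under eq_bigr do rewrite sqr_normc rmorph_sum big_distrlr /=.
rewrite exchange_big; apply: eq_bigr => v cv.
rewrite exchange_big; apply: eq_bigr => v' cv'.
under eq_bigr do rewrite (rmorphM (@conjc R)) mulrACA mulrC.
rewrite -mulr_sumr sum_e_mulVconj //.
by rewrite (eqn_mod_inv _ _ _ _ _ (invmod_modb _ cv) (invmod_modb _ cv')) mulrC.
Qed.

Lemma sum_pairs_eq_modb :
  \sum_(v < b * r | coprime v (b * r)) \sum_(v' < b * r | coprime v' (b * r))
     phase_sum v * conjc (phase_sum v') * (if (v == v' %[mod b])%N then b%:R else 0)
  = b%:R * \sum_(y < b) residue_sum y * conjc (residue_sum y).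
Proof.
pose modb (v : 'I_(b * r)) : 'I_b := Ordinal (ltn_pmod v b_gt0).
rewrite (partition_big modb xpredT) //= mulr_sumr.
apply: eq_bigr => y _; rewrite /residue_sum rmorph_sum big_distrlr /= mulr_sumr.
apply: eq_big => // v /andP[cv /eqP vy].
rewrite mulr_sumr big_mkcondr /=; apply: eq_bigr => v' cv'.
rewrite (_ : v %% b = y)%N -?vy // eq_sym.
by case: ifP => _; rewrite ?mulr0 // mulrC.
Qed.

Lemma residue_sumE (y : nat) : (y < b)%N ->
  residue_sum y = if coprime y b then r%:R * reduced_sum y else 0.
Proof.
move=> yb; rewrite /residue_sum.
under eq_bigl => v.
  rewrite (coprime_mul_supp _ _ _ r_gt0 supp_rb).
  rewrite (_ : _ && _ = coprime y b && (v %% b == y)%N); last first.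
    by case: eqP => [->|_]; rewrite ?andbF.
  over.
case: (coprime y b) => /=; last by rewrite big_pred0.
rewrite sum_residue_class // /phase_sum exchange_big /= /reduced_sum.
rewrite mulr_sumr [RHS]big_mkcond /=; apply: eq_bigr => m _.
under eq_bigr => t _.
  rewrite (_ : _ / _ = (m * y)%N%:R / (b * r)%N%:R + t%:R * ((m%:Z)%:~R / r%:R)).
    by rewrite eD mulrA; over.
  by rewrite -pmulrn !natrM natrD natrM; field; rewrite b_neq0 r_neq0.
rewrite -mulr_sumr sum_e_ord // dvdzE /=.
case: ifP => [/divnK rm|_]; last by rewrite mulr0.
rewrite [RHS]mulrC; congr (_ * e_ _ * _).
by rewrite -{1}rm !natrM; field; rewrite b_neq0 r_neq0.
Qed.

Lemma sum_residue_sum_sqr :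
  \sum_(y < b) residue_sum y * conjc (residue_sum y) =
  (r ^ 2)%N%:R * \sum_(y < b | coprime y b) `| reduced_sum y | ^+ 2.
Proof.
rewrite mulr_sumr [RHS]big_mkcond /=; apply: eq_bigr => y _.
rewrite residue_sumE //; case: ifP => _; last by rewrite rmorph0 mulr0.
by rewrite sqr_normc rmorphM /= conjc_nat natrX expr2 mulrACA.
Qed.

End KloostermanIdentity.

Theorem lemma11p2 (R : realType) (N : nat) (c : nat -> R[i]) (b r : nat)
  (hb : (0 < b)%N) (hr : (0 < r)%N)
  (hrb : forall p : nat, prime p -> (p %| r)%N -> (p %| b)%N) :
  \sum_(x < b)
     `| \sum_(1 <= m < N.+1) c m * kloosterman R (r * x)%N%:Z m%:Z (b * r) | ^+ 2
  = (b * r ^ 2)%N%:R *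
    \sum_(y < b | coprime y b)
     `| \sum_(1 <= m < N.+1 | (r %| m)%N)
          c m * e_ ((y * (m %/ r))%N%:R / b%:R) | ^+ 2.
Proof.
under eq_bigr do rewrite sum_kloosterman_phase //.
rewrite sum_sqr_norm_kloosterman_phase // sum_pairs_eq_modb //.
by rewrite sum_residue_sum_sqr // natrM mulrA.
Qed.
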